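(* Let $(\mathscr{N},K)$ be a PL-RDK system whose underlying network $\mathscr{N}$ has deficiency zero and which has a positive equilibrium. If a pair of reactions in one linkage class of $\mathscr{N}$ forms an SF-pair in a species $X$, then the system has absolute concentration robustness in $X$.
   Context: A CRN $\mathscr{N}=(\mathscr{S},\mathscr{C},\mathscr{R})$ has species $\mathscr{S}$, complexes $\mathscr{C}\subset\mathbb{R}^{\mathscr{S}}_{\ge0}$ and reactions $\mathscr{R}\subset\mathscr{C}\times\mathscr{C}$ (no reaction $y\to y$). Linkage classes are the connected components of the digraph $(\mathscr{C},\mathscr{R})$. The deficiency is $\delta=n-\ell-s$ with $n$ the number of complexes, $\ell$ the number of linkage classes and $s=\dim\mathrm{span}\{y'-y:y\to y'\in\mathscr{R}\}$. A power law kinetics has rate functions $K_j(x)=k_j\prod_X x_X^{F_{jX}}$ for $x\in\mathbb{R}^{\mathscr{S}}_{>0}$, with $k_j>0$ and $F$ a real kinetic order matrix whose row $F_{j,\cdot}$ is the kinetic order vector of reaction $R_j$; it is PL-RDK if reactions with the same reactant complex have identical kinetic order vectors. An SF-pair in $X$ is a pair of reactions whose kinetic order vectors differ only in the $X$-coordinate. A positive equilibrium is $c\in\mathbb{R}^{\mathscr{S}}_{>0}$ with $\sum_{y\to y'}K_{y\to y'}(c)(y'-y)=0$. ACR in $X$: a positive equilibrium exists and all positive equilibria have the same $X$-coordinate. *)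

From HB Require Import structures.
From mathcomp Require Import all_boot all_order all_algebra.
From mathcomp Require Import reals exp.
Set Implicit Arguments. Unset Strict Implicit. Unset Printing Implicit Defensive.
Import Order.TTheory GRing.Theory Num.Theory.
Local Open Scope ring_scope.

(* A CRN with m species ('I_m), n complexes ('I_n) given by y : 'I_n -> 'rV_m,
   and r reactions ('I_r), reaction j being  y (src j) -> y (tgt j). *)
Section CRN.
Variables (R : realType) (m n r : nat).
Variables (y : 'I_n -> 'rV[R]_m) (src tgt : 'I_r -> 'I_n).

Definition is_CRN : Prop :=
  injective y /\
      (forall i X, 0 <= y i ord0 X) /\
      (forall j, src j != tgt j) /\
      (forall j1 j2, src j1 = src j2 -> tgt j1 = tgt j2 -> j1 = j2) /\ (* R is a set *)
      (forall i, exists j, src j = i \/ tgt j = i) /\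
    (forall X, exists i, y i ord0 X != 0).

Definition cadj : rel 'I_n :=
  fun u v => [exists j, ((src j == u) && (tgt j == v)) || ((src j == v) && (tgt j == u))].

Definition nlinkage : nat :=
  #|[set [set v | connect cadj u v] | u : 'I_n]|.

(* stoichiometric matrix (rows = reaction vectors), s = its rank *)
Definition reaction_vectors : 'M[R]_(r, m) :=
  \matrix_(j < r, X < m) (y (tgt j) ord0 X - y (src j) ord0 X).

Definition deficiency : int :=
  (n%:Z - (nlinkage)%:Z - (\rank reaction_vectors)%:Z)%R.

Definition same_linkage_class (j1 j2 : 'I_r) : bool :=
  connect cadj (src j1) (src j2).

Variables (k : 'I_r -> R) (F : 'M[R]_(r, m)).

Definition rate (j : 'I_r) (x : 'rV[R]_m) : R :=
  k j * \prod_(X < m) powR (x ord0 X) (F j X).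

Definition PL_RDK : Prop :=
  forall j1 j2, src j1 = src j2 -> row j1 F = row j2 F.

Definition SF_pair (X : 'I_m) (j1 j2 : 'I_r) : Prop :=
  F j1 X != F j2 X /\ (forall Z, Z != X -> F j1 Z = F j2 Z).

Definition positive_equilibrium (c : 'rV[R]_m) : Prop :=
  (forall X, 0 < c ord0 X) /\
  \sum_(j < r) rate j c *: (y (tgt j) - y (src j)) = 0.

Definition ACR (X : 'I_m) : Prop :=
  (exists c, positive_equilibrium c) /\
  (forall c1 c2, positive_equilibrium c1 -> positive_equilibrium c2 ->
     c1 ord0 X = c2 ord0 X).
End CRN.

From mathcomp Require Import all_boot all_order all_algebra.
From mathcomp Require Import reals exp.
From mathcomp Require Import zify.
Import Order.TTheory GRing.Theory Num.Theory.
Local Open Scope ring_scope.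

(* Deficiency zero forces every positive equilibrium to be complex balanced:
   n - l - s = 0 together with rank(incidence) <= n - l gives
   rank(incidence * complexes) = rank(incidence), so a rate vector killed by the
   stoichiometric map is already killed by the incidence matrix.  For PL-RDK
   kinetics the ratio of the rates at two positive equilibria c1, c2 depends only
   on the reactant complex, and a maximum principle for positive circulations
   makes it constant on each linkage class.  For an SF-pair j1, j2 in X lying in
   one class, taking logarithms leaves (F j1 X - F j2 X) (ln c1_X - ln c2_X) = 0. *)

Lemma sumr_mul_delta (R : pzSemiRingType) (n : nat) (f : 'I_n -> R) (a : 'I_n) :
  \sum_i f i * (a == i)%:R = f a.
Proof.
rewrite (bigD1 a) //= eqxx mulr1 big1 ?addr0 // => i.
by rewrite eq_sym => /negbTE ->; rewrite mulr0.
Qed.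

Lemma sumr_delta_in (R : pzSemiRingType) (n : nat) (S : {set 'I_n}) (a : 'I_n) :
  \sum_(i in S) ((a == i)%:R : R) = (a \in S)%:R.
Proof.
rewrite big_mkcond (bigD1 a) //= eqxx big1 ?addr0 => [|i]; first by case: (a \in S).
by rewrite eq_sym => /negbTE ->; case: (i \in S).
Qed.

Lemma factor_through {I J : finType} {T : Type} (x0 : T) (f : I -> J) (g : I -> T) :
  (forall i i', f i = f i' -> g i = g i') -> exists h : J -> T, forall i, g i = h (f i).
Proof.
move=> gf; exists (fun j => if [pick i | f i == j] is Some i then g i else x0) => i.
by case: pickP => [i' /eqP /gf -> | /(_ i)]; rewrite ?eqxx.
Qed.

Lemma mulmx_eq0_mxrank_eq (R : fieldType) (p q s : nat)
    (A : 'M[R]_(p, q)) (B : 'M[R]_(q, s)) (u : 'rV[R]_p) :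
  \rank (A *m B) = \rank A -> u *m A *m B = 0 -> u *m A = 0.
Proof.
move=> rankAB uAB; have /eqP := mxrank_mul_ker A B.
rewrite rankAB -{2}[\rank A]addn0 eqn_add2l mxrank_eq0 => /eqP capA0.
by apply/eqP; rewrite -submx0 -capA0 sub_capmx submxMl sub_kermx uAB eqxx.
Qed.

Section Incidence.
Context {n r : nat} (src tgt : 'I_r -> 'I_n).

Definition incidence_mx (R : pzRingType) : 'M[R]_(r, n) :=
  \matrix_(j, i) ((tgt j == i)%:R - (src j == i)%:R).

Lemma cadj_sym : symmetric (cadj src tgt).
Proof. by move=> u v; apply/existsP/existsP => -[j hj]; exists j; rewrite orbC. Qed.

Lemma connect_cadj_sym : connect_sym (cadj src tgt).
Proof. exact: sym_connect_sym cadj_sym. Qed.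

Lemma connect_src_tgt u j :
  connect (cadj src tgt) u (src j) = connect (cadj src tgt) u (tgt j).
Proof.
apply: (same_connect_r connect_cadj_sym); apply: connect1.
by apply/existsP; exists j; rewrite !eqxx.
Qed.

Definition linkage_class (u : 'I_n) : {set 'I_n} := [set v | connect (cadj src tgt) u v].

Definition linkage_classes : {set {set 'I_n}} := [set linkage_class u | u : 'I_n].

Lemma linkage_classP (a : 'I_#|linkage_classes|) :
  exists u, enum_val a = linkage_class u.
Proof. by have /imsetP[u _ ->] := enum_valP a; exists u. Qed.

Definition class_mx (R : pzRingType) : 'M[R]_(#|linkage_classes|, n) :=
  \matrix_(a < #|linkage_classes|, i < n) (i \in (enum_val a : {set 'I_n}))%:R.

Lemma class_mx_incidence (R : pzRingType) :
  class_mx R *m (incidence_mx R)^T = 0.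
Proof.
apply/matrixP => a j; rewrite !mxE.
under eq_bigr => i _ do rewrite !mxE mulrBr.
have [u ->] := linkage_classP a.
by rewrite sumrB !sumr_mul_delta !inE connect_src_tgt subrr.
Qed.

Lemma linkage_class_eq u v :
  v \in linkage_class u -> linkage_class u = linkage_class v.
Proof.
rewrite inE => uv; apply/setP => w; rewrite !inE.
exact: (same_connect connect_cadj_sym).
Qed.

Lemma class_mx_free (R : fieldType) : row_free (class_mx R).
Proof.
apply/inj_row_free => v vC0; apply/rowP => a; rewrite mxE.
have [u Ea] := linkage_classP a.
have /rowP/(_ u) := vC0; rewrite !mxE (bigD1 a) //= !mxE Ea inE connect0 mulr1.
rewrite big1 ?addr0 // => b; rewrite !mxE; have [u' Eb] := linkage_classP b.
case: (boolP (u \in enum_val b)) => [|_]; last by rewrite mulr0.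
rewrite Eb => /linkage_class_eq; rewrite -Eb -Ea => /enum_val_inj ->.
by rewrite eqxx.
Qed.

Lemma rank_incidence_mx (R : fieldType) :
  (\rank (incidence_mx R) + nlinkage src tgt <= n)%N.
Proof.
have : (class_mx R <= kermx (incidence_mx R)^T)%MS.
  by rewrite sub_kermx class_mx_incidence.
move/mxrankS; rewrite mxrank_ker mxrank_tr (eqP (class_mx_free R)).
have -> : nlinkage src tgt = #|linkage_classes| by [].
have := rank_leq_col (incidence_mx R); lia.
Qed.

Lemma incidence_flux (R : pzRingType) (w : 'rV[R]_r) (S : {set 'I_n}) :
  \sum_(i in S) (w *m incidence_mx R) ord0 i =
  \sum_j w ord0 j * ((tgt j \in S)%:R - (src j \in S)%:R).
Proof.
under eq_bigr => i _ do rewrite mxE.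
rewrite exchange_big; apply: eq_bigr => j _; rewrite -mulr_sumr.
by under eq_bigr => i _ do rewrite mxE; rewrite sumrB !sumr_delta_in.
Qed.

End Incidence.

Section Circulation.
Context {R : realFieldType} {n r : nat} {src tgt : 'I_r -> 'I_n}.
Local Notation incidence := (incidence_mx src tgt R).

(* The net flux of w into S is zero and every crossing reaction contributes to
   it with the same sign. *)
Lemma circulation_cut (w : 'rV[R]_r) (S : {set 'I_n}) :
    w *m incidence = 0 ->
    (forall j, src j \notin S -> tgt j \in S -> 0 <= w ord0 j) ->
    (forall j, src j \in S -> tgt j \notin S -> w ord0 j <= 0) ->
  forall j, (src j \in S) != (tgt j \in S) -> w ord0 j = 0.
Proof.
move=> w_circ w_in w_out.
have term_ge0 j : 0 <= w ord0 j * ((tgt j \in S)%:R - (src j \in S)%:R).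
  case: (boolP (src j \in S)) => sS; case: (boolP (tgt j \in S)) => tS;
    rewrite ?subrr ?mulr0 ?subr0 ?mulr1 ?sub0r ?mulrN1 ?oppr_ge0 //; auto.
have flux0 : \sum_j w ord0 j * ((tgt j \in S)%:R - (src j \in S)%:R) = 0.
  by rewrite -incidence_flux w_circ big1 // => i _; rewrite mxE.
move=> j; have := psumr_eq0P (fun j _ => term_ge0 j) flux0 (i := j) isT.
by case: (src j \in S); case: (tgt j \in S);
  rewrite //= ?subr0 ?mulr1 ?sub0r ?mulrN1 => // /eqP; rewrite ?oppr_eq0 => /eqP.
Qed.

Lemma positive_circulation_closed (w : 'rV[R]_r) (S : {set 'I_n}) :
    (forall j, 0 < w ord0 j) -> w *m incidence = 0 ->
    (forall j, tgt j \in S -> src j \in S) ->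
  closed (cadj src tgt) S.
Proof.
move=> w_gt0 w_circ no_entry.
have no_exit j : src j \in S -> tgt j \in S.
  move=> sS; apply/negPn/negP => tS; have : (- w) ord0 j = 0.
    apply: (circulation_cut (- w) S); last by rewrite sS (negbTE tS).
    - by rewrite mulNmx w_circ oppr0.
    - by move=> j' /negbTE sS' /no_entry; rewrite sS'.
    - by move=> j' _ _; rewrite mxE oppr_le0 ltW.
  by move/eqP; rewrite mxE oppr_eq0 gt_eqF.
have S_edge j : (src j \in S) = (tgt j \in S).
  by apply/idP/idP => [/no_exit | /no_entry].
by move=> a b /existsP[j /orP[] /andP[/eqP <- /eqP <-]]; rewrite S_edge.
Qed.

(* Maximum principle: on the set S where t attains its maximum over the class
   of u, the circulation gap is nonnegative on reactions entering S, so by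
   circulation_cut it vanishes there, i.e. no reaction enters S. *)
Lemma circulation_ratio_connect (w1 w2 : 'rV[R]_r) (t : 'I_n -> R) :
    (forall j, 0 < w2 ord0 j) -> w1 *m incidence = 0 -> w2 *m incidence = 0 ->
    (forall j, w1 ord0 j = t (src j) * w2 ord0 j) ->
  forall u v, connect (cadj src tgt) u v -> t u = t v.
Proof.
move=> w2_gt0 w1_circ w2_circ w1_ratio u v uv; pose L := linkage_class src tgt u.
have uL : u \in L by rewrite inE connect0.
have [i0 Li0 t_le] := @arg_maxP _ _ _ u (fun i => i \in L) t uL.
pose S := [set i in L | t i == t i0].
have L_edge j : (src j \in L) = (tgt j \in L) by rewrite !inE connect_src_tgt.
pose gap := t i0 *: w2 - w1.
have gapE j : gap ord0 j = (t i0 - t (src j)) * w2 ord0 j.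
  by rewrite !mxE w1_ratio mulrBl.
have gap_circ : gap *m incidence = 0.
  by rewrite mulmxBl -scalemxAl w1_circ w2_circ scaler0 subrr.
have no_entry j : tgt j \in S -> src j \in S.
  move=> tS; have sL : src j \in L by rewrite L_edge; case/setIdP: tS.
  apply/negPn/negP => sS; have : gap ord0 j = 0.
    apply: (circulation_cut _ S gap_circ); last by rewrite (negbTE sS) tS.
      move=> j' _ /setIdP[tL _]; rewrite gapE; apply: mulr_ge0; last exact: ltW.
      by rewrite subr_ge0; apply: t_le; rewrite L_edge.
    by move=> j' /setIdP[_ /eqP tj'] _; rewrite gapE tj' subrr mul0r.
  rewrite gapE => /eqP; rewrite mulf_eq0 (gt_eqF (w2_gt0 j)) orbF subr_eq0 => /eqP ti0.
  by move: sS; rewrite inE sL -ti0 eqxx.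
have S_closed := positive_circulation_closed w2 S w2_gt0 w2_circ no_entry.
have i0S : i0 \in S by rewrite inE Li0 eqxx.
have uS : u \in S.
  by rewrite (closed_connect S_closed (_ : connect _ u i0)) //; rewrite inE in Li0.
have vS : v \in S by rewrite -(closed_connect S_closed uv).
by move: uS vS; rewrite !inE => /andP[_ /eqP ->] /andP[_ /eqP ->].
Qed.

End Circulation.

Lemma ln_prod (R : realType) (I : finType) (f : I -> R) :
  (forall i, 0 < f i) -> ln (\prod_i f i) = \sum_i ln (f i).
Proof.
move=> f_gt0; suff [] : 0 < \prod_i f i /\ ln (\prod_i f i) = \sum_i ln (f i) by [].
apply: (big_ind2 (fun p s => 0 < p /\ ln p = s))
  => [|p1 s1 p2 s2 [p1_gt0 <-] [p2_gt0 <-]|i _].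
- by rewrite ln1.
- by rewrite mulr_gt0 // lnM ?posrE.
- by rewrite f_gt0.
Qed.

Definition monomial {R : realType} {m : nat} (f : 'I_m -> R) (c : 'rV[R]_m) : R :=
  \prod_X powR (c ord0 X) (f X).

Definition rate_row {R : realType} {m r : nat} (k : 'I_r -> R) (F : 'M[R]_(r, m))
  (c : 'rV[R]_m) : 'rV[R]_r := \row_j rate k F j c.

Section PowerLaw.
Context {R : realType} {m n r : nat} {y : 'I_n -> 'rV[R]_m} {src tgt : 'I_r -> 'I_n}.
Context {k : 'I_r -> R} {F : 'M[R]_(r, m)}.

Lemma rateE j (c : 'rV[R]_m) : rate k F j c = k j * monomial (F j) c.
Proof. by []. Qed.

Lemma monomial_gt0 (f : 'I_m -> R) (c : 'rV[R]_m) :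
  (forall X, 0 < c ord0 X) -> 0 < monomial f c.
Proof. by move=> c_gt0; apply: prodr_gt0 => X _; apply: powR_gt0. Qed.

Lemma ln_monomial (f : 'I_m -> R) (c : 'rV[R]_m) :
  (forall X, 0 < c ord0 X) -> ln (monomial f c) = \sum_X f X * ln (c ord0 X).
Proof.
move=> c_gt0; rewrite ln_prod => [|X]; last exact: powR_gt0.
by apply: eq_bigr => X _; rewrite ln_powR.
Qed.

Lemma monomial_ratio_eq_coord {f g : 'I_m -> R} {X : 'I_m} {c1 c2 : 'rV[R]_m} :
    (forall Z, 0 < c1 ord0 Z) -> (forall Z, 0 < c2 ord0 Z) ->
    f X != g X -> (forall Z, Z != X -> f Z = g Z) ->
  monomial f c1 / monomial f c2 = monomial g c1 / monomial g c2 -> c1 ord0 X = c2 ord0 X.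
Proof.
move=> c1_gt0 c2_gt0 fgX fgZ /(congr1 (@ln R)).
rewrite !ln_div ?posrE ?monomial_gt0 // !ln_monomial // -!sumrB => /eqP.
rewrite -subr_eq0 -sumrB (bigD1 X) //= big1 ?addr0 => [|Z ZX]; last first.
  by rewrite fgZ // subrr.
rewrite -!mulrBr -mulrBl mulf_eq0 subr_eq0 (negbTE fgX) subr_eq0 => /eqP.
by move/ln_inj; apply; rewrite posrE.
Qed.

Lemma PL_RDK_monomial :
  PL_RDK src F -> forall j1 j2, src j1 = src j2 -> monomial (F j1) =1 monomial (F j2).
Proof.
move=> rdk j1 j2 /rdk /rowP rowE c; apply: eq_bigr => X _.
by have := rowE X; rewrite !mxE => ->.
Qed.

Lemma reaction_vectorsE :
  reaction_vectors y src tgt = incidence_mx src tgt R *m \matrix_i y i.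
Proof.
apply/matrixP => j X; rewrite !mxE.
under eq_bigr => i _ do rewrite !mxE mulrBl ![_%:R * _]mulrC.
by rewrite sumrB !sumr_mul_delta.
Qed.

Lemma deficiency0_rank : deficiency y src tgt = 0 ->
  \rank (reaction_vectors y src tgt) = \rank (incidence_mx src tgt R).
Proof.
move=> def0; apply/eqP; rewrite eqn_leq {1}reaction_vectorsE mxrankM_maxl /=.
have := rank_incidence_mx src tgt R; move: def0; rewrite /deficiency.
move: (\rank _) (\rank _) (nlinkage _ _) => rk_rv rk_inc nl; lia.
Qed.

Lemma equilibrium_rate_row (c : 'rV[R]_m) : positive_equilibrium y src tgt k F c ->
  rate_row k F c *m reaction_vectors y src tgt = 0.
Proof.
move=> [_ eq0]; rewrite mulmx_sum_row -[RHS]eq0; apply: eq_bigr => j _.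
by rewrite mxE; congr (_ *: _); apply/rowP => X; rewrite !mxE.
Qed.

Lemma deficiency0_complex_balanced {c : 'rV[R]_m} :
    deficiency y src tgt = 0 -> positive_equilibrium y src tgt k F c ->
  rate_row k F c *m incidence_mx src tgt R = 0.
Proof.
move=> def0 /equilibrium_rate_row; rewrite reaction_vectorsE mulmxA.
by apply: mulmx_eq0_mxrank_eq; rewrite -reaction_vectorsE deficiency0_rank.
Qed.

End PowerLaw.

Theorem mainTheorem6 (R : realType) (m n r : nat)
  (y : 'I_n -> 'rV[R]_m) (src tgt : 'I_r -> 'I_n)
  (k : 'I_r -> R) (F : 'M[R]_(r, m)) :
  is_CRN y src tgt ->
  (forall j, 0 < k j) ->
  PL_RDK src F ->
  deficiency y src tgt = 0 ->
  (exists c, positive_equilibrium y src tgt k F c) ->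
  forall (X : 'I_m) (j1 j2 : 'I_r),
    same_linkage_class src tgt j1 j2 ->
    SF_pair F X j1 j2 ->
    ACR y src tgt k F X.
Proof.
move=> _ k_gt0 rdk def0 eq_ex X j1 j2 j12 [FX FZ]; split=> // c1 c2 eq1 eq2.
have [[c1_gt0 _] [c2_gt0 _]] := (eq1, eq2).
pose g j := monomial (F j) c1 / monomial (F j) c2.
have [t gE] : exists t : 'I_n -> R, forall j, g j = t (src j).
  by apply: (factor_through 0) => j j' /(PL_RDK_monomial rdk) mE; rewrite /g !mE.
apply: (monomial_ratio_eq_coord c1_gt0 c2_gt0 FX FZ).
rewrite -/(g j1) -/(g j2) !gE.
have rate2_gt0 j : 0 < rate_row k F c2 ord0 j.
  by rewrite mxE rateE mulr_gt0 ?monomial_gt0.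
have rate_ratio j : rate_row k F c1 ord0 j = t (src j) * rate_row k F c2 ord0 j.
  by rewrite !mxE !rateE -gE mulrCA divfK // gt_eqF ?monomial_gt0.
exact: (circulation_ratio_connect _ _ t rate2_gt0 (deficiency0_complex_balanced def0 eq1)
  (deficiency0_complex_balanced def0 eq2) rate_ratio _ _ j12).
Qed.
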